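(* Let $m \ge 2$ be a natural number and let $\tilde{\boldsymbol{\theta}}^m$ be a finite nonempty dataset of angles that has period $2\pi/m$. Then for every natural number $p$: $$\nu_p(\tilde{\boldsymbol{\theta}}^m) = 1 \quad \text{if } p \le m-1, \qquad 0 \le \nu_p(\tilde{\boldsymbol{\theta}}^m) \le 1 \quad \text{if } p = m.$$
   Context: A dataset of angles is a finite nonempty multiset $\boldsymbol{\theta} = \{\theta_j \mid j = 1, \dots, N\}$ of real numbers (angles in radians). For $p \in \mathbb{N} = \{1,2,\dots\}$, the $p$th angular variance is $\nu_p(\boldsymbol{\theta}) = 1 - \bar{R}_p$, where $\bar{R}_p = \sqrt{\bar{C}_p^2 + \bar{S}_p^2}$, $\bar{C}_p = \frac{1}{N}\sum_{j=1}^N \cos(p\theta_j)$, $\bar{S}_p = \frac{1}{N}\sum_{j=1}^N \sin(p\theta_j)$. A dataset has period $2\pi/m$ if, as a multiset of angles modulo $2\pi$, it is invariant under the rotation $\theta \mapsto \theta + 2\pi/m$. *)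

From Stdlib Require Import Reals List Permutation ZArith.
Open Scope R_scope.
Import ListNotations.

(* A dataset of angles is a finite nonempty multiset, represented as a
   nonempty list of reals (order irrelevant for all notions below). *)

Definition sumR (l : list R) : R := fold_right Rplus 0 l.

Definition Cbar (p : nat) (th : list R) : R :=
  sumR (map (fun t => cos (INR p * t)) th) / INR (length th).

Definition Sbar (p : nat) (th : list R) : R :=
  sumR (map (fun t => sin (INR p * t)) th) / INR (length th).

Definition Rbar (p : nat) (th : list R) : R :=
  sqrt (Cbar p th ^ 2 + Sbar p th ^ 2).

Definition nu (p : nat) (th : list R) : R := 1 - Rbar p th.

Definition cong2pi (x y : R) : Prop := exists k : Z, x - y = 2 * PI * IZR k.

Definition eq_mod2pi (l1 l2 : list R) : Prop :=
  exists l2', Permutation l2 l2' /\ Forall2 cong2pi l1 l2'.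

Definition has_period (m : nat) (th : list R) : Prop :=
  eq_mod2pi (map (fun t => t + 2 * PI / INR m) th) th.

(* Rotating every angle by 2π/m rotates the p-th resultant vector
   (Σ cos pθ_j, Σ sin pθ_j) by the angle 2πp/m.  Periodicity says the
   multiset of angles is unchanged modulo 2π, so the resultant is a fixed
   point of that rotation, which is nontrivial for 1 <= p <= m-1; hence the
   resultant vanishes and ν_p = 1.  The bound 0 <= ν_p <= 1 holds for every p:
   the resultant of N unit vectors has length at most N. *)

From Stdlib Require Import Reals List Lra Lia Psatz Permutation.
Open Scope R_scope.

Lemma sumR_cons (x : R) (l : list R) : sumR (x :: l) = x + sumR l.
Proof. reflexivity. Qed.

Lemma sumR_perm (l1 l2 : list R) : Permutation l1 l2 -> sumR l1 = sumR l2.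
Proof. induction 1; simpl; lra. Qed.

Lemma sumR_map_lin (f g : R -> R) (a b : R) (l : list R) :
  sumR (map (fun x => a * f x + b * g x) l) = a * sumR (map f l) + b * sumR (map g l).
Proof. induction l as [|x l IH]; simpl; [ring | rewrite IH; ring]. Qed.

Lemma cos_sin_2PI_IZR (k : Z) : cos (2 * PI * IZR k) = 1 /\ sin (2 * PI * IZR k) = 0.
Proof.
  assert (hsin : sin (IZR k * PI) = 0) by (apply sin_eq_0_1; exists k; reflexivity).
  split.
  - replace (2 * PI * IZR k) with (2 * (IZR k * PI)) by ring.
    rewrite cos_2a_sin, hsin; ring.
  - apply sin_eq_0_1; exists (2 * k)%Z; rewrite mult_IZR; ring.
Qed.

Lemma cong2pi_cos_sin (x y : R) : cong2pi x y -> cos x = cos y /\ sin x = sin y.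
Proof.
  intros [k hk]; replace x with (y + 2 * PI * IZR k) by lra.
  destruct (cos_sin_2PI_IZR k) as [hc hs].
  rewrite cos_plus, sin_plus, hc, hs; split; ring.
Qed.

Lemma cong2pi_scale (n : nat) (x y : R) :
  cong2pi x y -> cong2pi (INR n * x) (INR n * y).
Proof.
  intros [k hk]; exists (Z.of_nat n * k)%Z.
  rewrite mult_IZR, <- INR_IZR_INZ.
  replace x with (y + 2 * PI * IZR k) by lra; ring.
Qed.

Lemma eq_mod2pi_scale (n : nat) (l1 l2 : list R) :
  eq_mod2pi l1 l2 -> eq_mod2pi (map (Rmult (INR n)) l1) (map (Rmult (INR n)) l2).
Proof.
  intros [l2' [hperm hcong]]; exists (map (Rmult (INR n)) l2'); split.
  - exact (Permutation_map _ hperm).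
  - clear hperm; induction hcong; simpl; constructor; auto using cong2pi_scale.
Qed.

Lemma eq_mod2pi_sum_cos_sin (l1 l2 : list R) : eq_mod2pi l1 l2 ->
  sumR (map cos l1) = sumR (map cos l2) /\ sumR (map sin l1) = sumR (map sin l2).
Proof.
  intros [l2' [hperm hcong]].
  rewrite (sumR_perm _ _ (Permutation_map cos hperm)),
          (sumR_perm _ _ (Permutation_map sin hperm)).
  clear hperm; induction hcong as [|x y l l' hxy _ [IHc IHs]]; simpl; [lra |].
  destruct (cong2pi_cos_sin x y hxy); split; lra.
Qed.

Lemma sum_cos_shift (b : R) (l : list R) :
  sumR (map cos (map (fun x => x + b) l))
  = cos b * sumR (map cos l) + - sin b * sumR (map sin l).
Proof.
  rewrite map_map, <- sumR_map_lin; f_equal; apply map_ext; intros x.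
  rewrite cos_plus; ring.
Qed.

Lemma sum_sin_shift (b : R) (l : list R) :
  sumR (map sin (map (fun x => x + b) l))
  = cos b * sumR (map sin l) + sin b * sumR (map cos l).
Proof.
  rewrite map_map, <- sumR_map_lin; f_equal; apply map_ext; intros x.
  rewrite sin_plus; ring.
Qed.

Lemma cos_lt_1 (x : R) : 0 < x < 2 * PI -> cos x < 1.
Proof.
  intros hx.
  assert (hsin : 0 < sin (x / 2)) by (apply sin_gt_0; lra).
  replace x with (2 * (x / 2)) by field.
  rewrite cos_2a_sin; nra.
Qed.

(* The determinant of [I - rotation b] is [2 (1 - cos b)]. *)
Lemma rotation_fixpoint_0 (b u v : R) : cos b <> 1 ->
  u = cos b * u - sin b * v -> v = sin b * u + cos b * v -> u = 0 /\ v = 0.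
Proof.
  intros hb hu hv.
  pose proof (sin2_cos2 b) as hunit; unfold Rsqr in hunit.
  assert (hdet : 0 < 2 * (1 - cos b)) by (pose proof (COS_bound b); lra).
  assert (hu0 : 2 * (1 - cos b) * u = 0) by nra.
  assert (hv0 : 2 * (1 - cos b) * v = 0) by nra.
  split; [destruct (Rmult_integral _ _ hu0) | destruct (Rmult_integral _ _ hv0)]; lra.
Qed.

Lemma resultant_sq_le (l : list R) :
  sumR (map cos l) ^ 2 + sumR (map sin l) ^ 2 <= INR (length l) ^ 2.
Proof.
  induction l as [|x l IH]; [simpl; lra |].
  cbn [map length]; rewrite !sumR_cons, S_INR.
  set (C := sumR (map cos l)) in *; set (S := sumR (map sin l)) in *.
  set (n := INR (length l)) in *.
  assert (hn : 0 <= n) by apply pos_INR.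
  pose proof (sin2_cos2 x) as hunit; unfold Rsqr in hunit.
  (* Cauchy–Schwarz: (cos x C + sin x S)^2 <= C^2 + S^2 <= n^2. *)
  assert (hdot : cos x * C + sin x * S <= n).
  { assert (lagrange : (cos x * C + sin x * S) ^ 2 + (cos x * S - sin x * C) ^ 2
                       = (C ^ 2 + S ^ 2) * (sin x * sin x + cos x * cos x)) by ring.
    rewrite hunit, Rmult_1_r in lagrange.
    pose proof (pow2_ge_0 (cos x * S - sin x * C)).
    destruct (Rle_lt_dec (cos x * C + sin x * S) n); nra. }
  nra.
Qed.

Lemma Cbar_map_scale (p : nat) (th : list R) :
  Cbar p th = sumR (map cos (map (Rmult (INR p)) th)) / INR (length th).
Proof. unfold Cbar; rewrite map_map; reflexivity. Qed.

Lemma Sbar_map_scale (p : nat) (th : list R) :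
  Sbar p th = sumR (map sin (map (Rmult (INR p)) th)) / INR (length th).
Proof. unfold Sbar; rewrite map_map; reflexivity. Qed.

Lemma Cbar_Sbar_sq_le_1 (p : nat) (th : list R) : Cbar p th ^ 2 + Sbar p th ^ 2 <= 1.
Proof.
  rewrite Cbar_map_scale, Sbar_map_scale.
  pose proof (resultant_sq_le (map (Rmult (INR p)) th)) as hle.
  rewrite length_map in hle.
  set (C := sumR (map cos (map (Rmult (INR p)) th))) in *.
  set (S := sumR (map sin (map (Rmult (INR p)) th))) in *.
  set (N := INR (length th)) in *.
  assert (hN0 : 0 <= N) by apply pos_INR.
  destruct (Req_dec N 0) as [hN | hN].
  - rewrite hN; unfold Rdiv; rewrite Rinv_0; lra.
  - assert (hN2 : 0 < N ^ 2) by (apply pow_lt; lra).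
    replace ((C / N) ^ 2 + (S / N) ^ 2) with ((C ^ 2 + S ^ 2) * / N ^ 2) by (field; exact hN).
    rewrite <- (Rinv_r (N ^ 2)) by lra.
    apply Rmult_le_compat_r; [apply Rlt_le, Rinv_0_lt_compat |]; lra.
Qed.

Lemma nu_0_le_1 (p : nat) (th : list R) : 0 <= nu p th <= 1.
Proof.
  unfold nu, Rbar.
  pose proof (sqrt_pos (Cbar p th ^ 2 + Sbar p th ^ 2)).
  pose proof (sqrt_le_1_alt _ _ (Cbar_Sbar_sq_le_1 p th)) as hle.
  rewrite sqrt_1 in hle; lra.
Qed.

Lemma cos_2PI_frac_lt_1 (p m : nat) :
  (1 <= p)%nat -> (p < m)%nat -> cos (INR p * (2 * PI / INR m)) < 1.
Proof.
  intros hp hpm; apply cos_lt_1.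
  assert (hp1 : 1 <= INR p) by (apply (le_INR 1); exact hp).
  assert (hpm' : INR p < INR m) by (apply lt_INR; exact hpm).
  pose proof PI_RGT_0.
  replace (INR p * (2 * PI / INR m)) with (2 * PI * (INR p / INR m)) by (field; lra).
  assert (0 < INR p / INR m < 1).
  { split; [apply Rdiv_lt_0_compat; lra |].
    apply (Rmult_lt_reg_r (INR m)); [lra |]; field_simplify; lra. }
  nra.
Qed.

Lemma Cbar_Sbar_0_of_period (m p : nat) (th : list R) :
  has_period m th -> (1 <= p)%nat -> (p < m)%nat -> Cbar p th = 0 /\ Sbar p th = 0.
Proof.
  intros hper hp hpm.
  rewrite Cbar_map_scale, Sbar_map_scale.
  set (l := map (Rmult (INR p)) th).
  set (b := INR p * (2 * PI / INR m)).
  assert (hrot : eq_mod2pi (map (fun x => x + b) l) l).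
  { replace (map (fun x => x + b) l)
      with (map (Rmult (INR p)) (map (fun t => t + 2 * PI / INR m) th)).
    - exact (eq_mod2pi_scale p _ _ hper).
    - unfold l, b; rewrite !map_map; apply map_ext; intros t; ring. }
  destruct (eq_mod2pi_sum_cos_sin _ _ hrot) as [hcos hsin].
  rewrite sum_cos_shift in hcos; rewrite sum_sin_shift in hsin.
  destruct (rotation_fixpoint_0 b (sumR (map cos l)) (sumR (map sin l))) as [hC hS].
  - pose proof (cos_2PI_frac_lt_1 p m hp hpm) as hb; fold b in hb; lra.
  - lra.
  - lra.
  - unfold Rdiv; rewrite hC, hS; split; ring.
Qed.

Theorem theorem1 (m : nat) (th : list R) :
  (2 <= m)%nat -> th <> nil -> has_period m th ->
  (forall p : nat, (1 <= p)%nat -> (p <= m - 1)%nat -> nu p th = 1) /\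
  (0 <= nu m th <= 1).
Proof.
  intros _ _ hper; split.
  - intros p hp hpm.
    destruct (Cbar_Sbar_0_of_period m p th) as [hC hS]; [exact hper | exact hp | lia |].
    unfold nu, Rbar; rewrite hC, hS.
    replace (0 ^ 2 + 0 ^ 2) with 0 by ring.
    rewrite sqrt_0; ring.
  - apply nu_0_le_1.
Qed.
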